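(* Let $\mathcal{A}$ be a finite alphabet and $\mathbf{p}$ an irreducible pair on $\mathcal{A}$. (1) If $\mathbf{q}$ is in the labeled extended Rauzy class of $\mathbf{p}$, then the quadratic forms $\mathcal{Q}_{\mathbf{p}}$ and $\mathcal{Q}_{\mathbf{q}}$ are equivalent. (2) If $\mathbf{q}=(q_0,q_1)$ is a pair on an alphabet $\mathcal{A}'$ such that the permutation $q_1\circ q_0^{-1}$ lies in the non-labeled extended Rauzy class of $\mathbf{p}$, then $\mathcal{Q}_{\mathbf{p}}$ and $\mathcal{Q}_{\mathbf{q}}$ are equivalent.
   Context: Let $n=\#\mathcal{A}$. A pair is $\mathbf{p}=(p_0,p_1)$ with $p_0,p_1:\mathcal{A}\to\{1,\dots,n\}$ bijections. Irreducible: $p_0^{-1}\{1,\dots,k\}\ne p_1^{-1}\{1,\dots,k\}$ for $1\le k<n$. Rauzy move of type $\varepsilon$: $\varepsilon\mathbf{p}=(p'_0,p'_1)$, $p'_\varepsilon=p_\varepsilon$, and for $z=p_\varepsilon^{-1}(n)$, $p'_{1-\varepsilon}(b)=p_{1-\varepsilon}(b)$ if $p_{1-\varepsilon}(b)\le p_{1-\varepsilon}(z)$, $=p_{1-\varepsilon}(b)+1$ if $p_{1-\varepsilon}(z)<p_{1-\varepsilon}(b)<n$, $=p_{1-\varepsilon}(z)+1$ if $p_{1-\varepsilon}(b)=n$. Left Rauzy move of type $\varepsilon$: $\tilde\varepsilon\mathbf{p}=(p'_0,p'_1)$, $p'_\varepsilon=p_\varepsilon$, and for $a=p_\varepsilon^{-1}(1)$,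 $p'_{1-\varepsilon}(b)=p_{1-\varepsilon}(a)-1$ if $p_{1-\varepsilon}(b)=1$, $=p_{1-\varepsilon}(b)-1$ if $1<p_{1-\varepsilon}(b)<p_{1-\varepsilon}(a)$, unchanged otherwise. The labeled extended Rauzy class of $\mathbf{p}$ is the set of pairs reachable from $\mathbf{p}$ by Rauzy and left Rauzy moves of both types; the non-labeled extended Rauzy class is its image under $(p_0,p_1)\mapsto p_1\circ p_0^{-1}\in\mathfrak{S}_n$. The canonical quadratic form of $\mathbf{p}$ is $\mathcal{Q}_{\mathbf{p}}:\mathbb{Z}_2^{\mathcal{A}}\to\mathbb{Z}_2$, $\mathcal{Q}_{\mathbf{p}}(v)=\sum_{a\in\mathcal{A}}v_a^2+\sum_{\{a,b\}}L_{\mathbf{p}}(a,b)v_av_b \pmod 2$, the second sum over unordered pairs of distinct letters, where $L_{\mathbf{p}}(a,b)=1$ if $(p_0(a)-p_0(b))(p_1(a)-p_1(b))<0$ and $0$ otherwise. Quadratic forms $\mathcal{Q}:\mathbb{Z}_2^{\mathcal{A}}\to\mathbb{Z}_2$ and $\mathcal{Q}':\mathbb{Z}_2^{\mathcal{A}'}\to\mathbb{Z}_2$ are equivalent if there is an invertible linear map $A:\mathbb{Z}_2^{\mathcal{A}}\to\mathbb{Z}_2^{\mathcal{A}'}$ with $\mathcal{Q}'\circ A=\mathcal{Q}$. *)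

From mathcomp Require Import all_boot all_algebra.
Set Implicit Arguments. Unset Strict Implicit. Unset Printing Implicit Defensive.
Import GRing.Theory Num.Theory.

(* A pair on alphabet A: p false = p_0, p true = p_1, each A -> nat
   (values intended in {1,...,#|A|}).  The type eps is bool, 1-eps = ~~eps. *)
Definition pairT (A : finType) := bool -> A -> nat.

Definition is_pair (A : finType) (p : pairT A) : Prop :=
  forall e : bool,
    injective (p e) /\ (forall a, 1 <= p e a <= #|A|) /\
    (forall k, 1 <= k <= #|A| -> exists a, p e a = k).

Definition irreducible (A : finType) (p : pairT A) : Prop :=
  forall k, 1 <= k < #|A| ->
    [set a | p false a <= k] != [set a | p true a <= k].

Definition rauzy_move (A : finType) (e : bool) (p q : pairT A) : Prop :=
  exists z, p e z = #|A| /\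
    (forall b, q e b = p e b) /\
    (forall b, q (~~ e) b =
       if p (~~ e) b <= p (~~ e) z then p (~~ e) b
       else if p (~~ e) b < #|A| then (p (~~ e) b).+1
       else (p (~~ e) z).+1).

Definition left_rauzy_move (A : finType) (e : bool) (p q : pairT A) : Prop :=
  exists a, p e a = 1 /\
    (forall b, q e b = p e b) /\
    (forall b, q (~~ e) b =
       if p (~~ e) b == 1 then p (~~ e) a - 1
       else if 1 < p (~~ e) b < p (~~ e) a then p (~~ e) b - 1
       else p (~~ e) b).

Definition ext_move (A : finType) (p q : pairT A) : Prop :=
  exists e, rauzy_move e p q \/ left_rauzy_move e p q.

Inductive in_labeled_class (A : finType) (p : pairT A) : pairT A -> Prop :=
  | lc_refl : in_labeled_class p p
  | lc_step q r : in_labeled_class p q -> ext_move q r -> in_labeled_class p r.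

(* the permutation p_1 o p_0^{-1} of {1,...,n}, as a function on nat
   (value 0 outside the range) *)
Definition perm_of (A : finType) (p : pairT A) (k : nat) : nat :=
  if [pick a | p false a == k] is Some a then p true a else 0.

(* the permutation sigma (of {1..#|A'|}) lies in the non-labeled extended
   Rauzy class of p: it is the image of some pair of the labeled class. *)
Definition in_nonlabeled_class (A : finType) (p : pairT A)
    (n : nat) (sigma : nat -> nat) : Prop :=
  exists p', in_labeled_class p p' /\ n = #|A| /\
    (forall k, 1 <= k <= n -> perm_of p' k = sigma k).

Definition Lp (A : finType) (p : pairT A) (a b : A) : bool :=
  ((Posz (p false a) - Posz (p false b)) * (Posz (p true a) - Posz (p true b)) < 0)%R.

(* canonical quadratic form; unordered pairs {a,b} enumerated once via enum_rank *)
Definition Qform (A : finType) (p : pairT A) (v : {ffun A -> 'F_2}) : 'F_2 :=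
  (\sum_(a : A) v a ^+ 2 +
   \sum_(a : A) \sum_(b : A | (enum_rank a < enum_rank b)%N)
      (Lp p a b)%:R * v a * v b)%R.

Local Open Scope ring_scope.
Definition qf_equiv (A A' : finType) (Q : {ffun A -> 'F_2} -> 'F_2)
    (Q' : {ffun A' -> 'F_2} -> 'F_2) : Prop :=
  exists f : {ffun A -> 'F_2} -> {ffun A' -> 'F_2},
    (forall (c : 'F_2) (u v : {ffun A -> 'F_2}),
        f [ffun a => c * u a + v a] = [ffun a' => c * f u a' + f v a']) /\
    bijective f /\ (forall v, Q' (f v) = Q v).

From mathcomp Require Import all_boot all_algebra zify ring.
Set Implicit Arguments. Unset Strict Implicit. Unset Printing Implicit Defensive.
Import GRing.Theory.

(* A Rauzy move with winner z (last in row e) and loser w (last in row 1-e)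
   only changes the crossings of w: in the new pair w crosses exactly the
   letters crossed by w or by z (but not both) in the old one.  Over F_2 this
   is the effect of the transvection v |-> v + v_w e_z on the canonical
   quadratic form, so Rauzy moves give equivalent forms.  A left Rauzy move is
   a Rauzy move of the reversed pair (positions k |-> n + 1 - k), which has the
   same crossings.  Two pairs with the same permutation differ by a relabeling
   of the alphabet preserving crossings.  The only degenerate moves (winner =
   loser) are excluded by irreducibility, via the invariant that no letter is
   first, or last, in both rows. *)

Section QuadraticFormOfRelation.
Local Open Scope ring_scope.
Variable A : finType.
Implicit Types (L : rel A) (v : {ffun A -> 'F_2}).

Lemma F2_addrr (x : 'F_2) : x + x = 0.
Proof. exact: (addrr_pchar2 (pchar_Fp (isT : prime 2))). Qed.

Lemma F2_natr_addb (b1 b2 : bool) : ((b1 (+) b2)%:R : 'F_2) = b1%:R + b2%:R.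
Proof. by case: b1; case: b2; rewrite ?addr0 ?add0r // F2_addrr. Qed.

Lemma sum_eq_natr_mul (R : pzSemiRingType) z (F : A -> R) :
  \sum_a (a == z)%:R * F a = F z.
Proof.
rewrite (bigD1 z) //= eqxx mul1r big1 ?addr0 // => a /negbTE ->.
by rewrite mul0r.
Qed.

Definition qform_of L v : 'F_2 :=
  \sum_a v a ^+ 2 +
  \sum_a \sum_(b | (enum_rank a < enum_rank b)%N) (L a b)%:R * v a * v b.

Lemma eq_qform_of L L' : L =2 L' -> qform_of L =1 qform_of L'.
Proof.
move=> eqL v; congr (_ + _).
by apply: eq_bigr => a _; apply: eq_bigr => b _; rewrite eqL.
Qed.

Definition add_coord v z (t : 'F_2) := [ffun a => v a + (a == z)%:R * t].

Definition transvection z w v := add_coord v z (v w).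

(* Over F_2 the polar form of [qform_of L] is the adjacency form of L. *)
Lemma qform_add_coord L : symmetric L -> irreflexive L -> forall v z t,
  qform_of L (add_coord v z t) =
  qform_of L v + t ^+ 2 + t * \sum_b (L z b)%:R * v b.
Proof.
move=> Lsym Lirr v z t.
pose G a b : 'F_2 := ((enum_rank a < enum_rank b)%N)%:R * (L a b)%:R.
have qformG u : qform_of L u =
    \sum_a u a ^+ 2 + \sum_a \sum_b G a b * u a * u b.
  congr (_ + _); apply: eq_bigr => a _; rewrite big_mkcond.
  by apply: eq_bigr => b _; rewrite /G; case: ifP; rewrite ?mul1r ?mul0r.
rewrite !qformG.
have diag : \sum_a add_coord v z t a ^+ 2 = \sum_a v a ^+ 2 + t ^+ 2.
  rewrite -[t ^+ 2](sum_eq_natr_mul z (fun=> t ^+ 2)) -big_split /=.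
  apply: eq_bigr => a _; rewrite ffunE.
  by case: (a == z); rewrite /= ?mul0r ?addr0 // !mul1r sqrrD mulr2n F2_addrr addr0.
have offdiag :
    \sum_a \sum_b G a b * add_coord v z t a * add_coord v z t b =
    \sum_a \sum_b G a b * v a * v b +
    \sum_a \sum_b (b == z)%:R * (t * G a b * v a) +
    \sum_a \sum_b (a == z)%:R * (t * G a b * v b) +
    \sum_a \sum_b (a == z)%:R * ((b == z)%:R * (t ^+ 2 * G a b)).
  rewrite -!big_split /=; apply: eq_bigr => a _.
  rewrite -!big_split /=; apply: eq_bigr => b _; rewrite !ffunE.
  by case: (a == z); case: (b == z); rewrite /=; ring.
rewrite diag offdiag.
under [in X in _ + (_ + X + _ + _)]eq_bigr => a _ do rewrite sum_eq_natr_mul.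
under [in X in _ + (_ + _ + X + _)]eq_bigr => a _ do rewrite -mulr_sumr.
rewrite (sum_eq_natr_mul z (fun a => \sum_b t * G a b * v b)).
under [in X in _ + (_ + _ + _ + X)]eq_bigr => a _ do rewrite -mulr_sumr.
rewrite (sum_eq_natr_mul z (fun a => \sum_b (b == z)%:R * (t ^+ 2 * G a b))).
have Gzz : G z z = 0 by rewrite /G ltnn mul0r.
rewrite sum_eq_natr_mul Gzz mulr0 addr0.
have cross : \sum_a t * G a z * v a + \sum_b t * G z b * v b =
             t * \sum_b (L z b)%:R * v b.
  rewrite mulr_sumr -big_split /=; apply: eq_bigr => b _; rewrite /G.
  case: (ltngtP (enum_rank b) (enum_rank z)) => [_|_|/val_inj/enum_rank_inj ->].
  - by rewrite /= Lsym; ring.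
  - by rewrite /= Lsym; ring.
  - by rewrite Lirr !(mulr0, mul0r) addr0.
by rewrite -cross; ring.
Qed.

Lemma qform_of_eq_off L L' w :
  (forall a b, a != w -> b != w -> L' a b = L a b) ->
  forall v, v w = 0 -> qform_of L' v = qform_of L v.
Proof.
move=> agree v vw; congr (_ + _); apply: eq_bigr => a _; apply: eq_bigr => b _.
have [->|aw] := eqVneq a w; first by rewrite vw !(mulr0, mul0r).
have [->|bw] := eqVneq b w; first by rewrite vw !(mulr0, mul0r).
by rewrite agree.
Qed.

Lemma qform_transvection L L' z w :
  symmetric L -> irreflexive L -> symmetric L' -> irreflexive L' ->
  (forall a b, a != w -> b != w -> L' a b = L a b) -> L w z ->
  (forall b, b != w -> L' w b = L w b (+) L z b) ->
  forall v, qform_of L' (transvection z w v) = qform_of L v.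
Proof.
move=> Lsym Lirr L'sym L'irr agree Lwz row_w v.
have zw : z != w by apply: contraTneq Lwz => ->; rewrite Lirr.
set t := v w; set v0 := add_coord v w t.
have v0w : v0 w = 0 by rewrite ffunE eqxx mul1r F2_addrr.
have ev : v = add_coord v0 w t.
  apply/ffunP => a; rewrite !ffunE -addrA.
  by case: (a == w); rewrite /= ?mul1r ?mul0r ?F2_addrr ?addr0.
have eT : transvection z w v = add_coord (add_coord v0 z t) w t.
  apply/ffunP => a; rewrite !ffunE -/t.
  case: (a == w); case: (a == z); rewrite /= ?mul1r ?mul0r ?addr0;
  by rewrite -?addrA ?F2_addrr ?addr0 // addrC -addrA F2_addrr addr0.
rewrite eT [in RHS]ev; clearbody v0 t.
rewrite !qform_add_coord // (qform_of_eq_off agree v0w).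
have L'wz : L' w z by rewrite row_w ?Lwz ?Lirr // eq_sym.
have -> : \sum_b (L' w b)%:R * add_coord v0 z t b =
          \sum_b (L' w b)%:R * v0 b + t.
  transitivity (\sum_b ((L' w b)%:R * v0 b + (b == z)%:R * ((L' w b)%:R * t))).
    by apply: eq_bigr => b _; rewrite ffunE; ring.
  by rewrite big_split /= sum_eq_natr_mul L'wz mul1r.
have rows : \sum_b (L' z b)%:R * v0 b + \sum_b (L' w b)%:R * v0 b =
            \sum_b (L w b)%:R * v0 b.
  rewrite -big_split /=; apply: eq_bigr => b _.
  have [->|bw] := eqVneq b w; first by rewrite v0w !mulr0 addr0.
  rewrite -mulrDl row_w // agree // F2_natr_addb.
  by rewrite addrC -addrA F2_addrr addr0.
apply: subr0_eq; rewrite -rows.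
move: (qform_of L v0) (\sum_b (L' z b)%:R * v0 b) (\sum_b (L' w b)%:R * v0 b).
move=> Q0 Bz Bw.
have -> : Q0 + t ^+ 2 + t * Bz + t ^+ 2 + t * (Bw + t) -
   (Q0 + t ^+ 2 + t * (Bz + Bw)) = (t ^+ 2 + t * t) by ring.
by rewrite -expr2 F2_addrr.
Qed.

End QuadraticFormOfRelation.

Section QuadraticFormEquivalence.
Local Open Scope ring_scope.

Lemma qf_equiv_refl (A : finType) (Q : {ffun A -> 'F_2} -> 'F_2) : qf_equiv Q Q.
Proof.
exists id; split; last split => //; last by exists id.
by move=> c u v; apply/ffunP => a; rewrite !ffunE.
Qed.

Lemma qf_equiv_trans (A B C : finType) (Q1 : {ffun A -> 'F_2} -> 'F_2)
    (Q2 : {ffun B -> 'F_2} -> 'F_2) (Q3 : {ffun C -> 'F_2} -> 'F_2) :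
  qf_equiv Q1 Q2 -> qf_equiv Q2 Q3 -> qf_equiv Q1 Q3.
Proof.
move=> [f [flin [fbij fQ]]] [g [glin [gbij gQ]]].
exists (g \o f); split; last split.
- by move=> c u v /=; rewrite flin glin.
- exact: bij_comp.
- by move=> v /=; rewrite gQ fQ.
Qed.

Lemma qf_equiv_ext (A B : finType) (Q1 Q1' : {ffun A -> 'F_2} -> 'F_2)
    (Q2 Q2' : {ffun B -> 'F_2} -> 'F_2) :
  Q1 =1 Q1' -> Q2 =1 Q2' -> qf_equiv Q1 Q2 -> qf_equiv Q1' Q2'.
Proof.
move=> e1 e2 [f [flin [fbij fQ]]].
by exists f; do 2 split => //; move=> v; rewrite -e1 -e2.
Qed.

Lemma qf_equiv_transvection (A : finType) (L L' : rel A) z w :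
  symmetric L -> irreflexive L -> symmetric L' -> irreflexive L' ->
  (forall a b, a != w -> b != w -> L' a b = L a b) -> L w z ->
  (forall b, b != w -> L' w b = L w b (+) L z b) ->
  qf_equiv (qform_of L) (qform_of L').
Proof.
move=> Lsym Lirr L'sym L'irr agree Lwz row_w.
have zw : z != w by apply: contraTneq Lwz => ->; rewrite Lirr.
have tK : involutive (transvection z w).
  move=> v; apply/ffunP => a.
  rewrite !ffunE [w == z]eq_sym (negbTE zw) mul0r addr0 -addrA.
  by case: (a == z); rewrite /= ?mul1r ?mul0r ?F2_addrr ?addr0.
exists (transvection z w); split; last split.
- by move=> c u v; apply/ffunP => a; rewrite !ffunE; ring.
- by exists (transvection z w).
- exact: qform_transvection.
Qed.

Lemma sum_ordered_pairs (R : comPzRingType) (T : finType) (r1 r2 : T -> nat)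
    (N : T -> T -> R) :
  injective r1 -> injective r2 -> (forall a b, N a b = N b a) ->
  \sum_a \sum_(b | (r1 a < r1 b)%N) N a b =
  \sum_a \sum_(b | (r2 a < r2 b)%N) N a b.
Proof.
move=> r1_inj r2_inj Nsym.
pose X a b : R := ((r1 a < r1 b)%N)%:R * ((r2 a < r2 b)%N)%:R * N a b.
pose Y a b : R := ((r1 a < r1 b)%N)%:R * ((r2 b < r2 a)%N)%:R * N a b.
have split1 a b : ((r1 a < r1 b)%N)%:R * N a b = X a b + Y a b.
  rewrite /X /Y; case: (ltngtP (r2 a) (r2 b)) => [_|_|/r2_inj ->] /=; try ring.
  by rewrite ltnn /=; ring.
have split2 a b : ((r2 a < r2 b)%N)%:R * N a b = X a b + Y b a.
  rewrite /X /Y Nsym; case: (ltngtP (r1 a) (r1 b)) => [_|_|/r1_inj ->] /=; try ring.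
  by rewrite ltnn /=; ring.
transitivity (\sum_a \sum_b X a b + \sum_a \sum_b Y a b).
  rewrite -big_split; apply: eq_bigr => a _; rewrite -big_split big_mkcond /=.
  by apply: eq_bigr => b _; rewrite -split1; case: ifP; rewrite ?mul1r ?mul0r.
rewrite [\sum_a \sum_b Y a b]exchange_big -big_split /=; apply: eq_bigr => a _.
rewrite -big_split [RHS]big_mkcond /=; apply: eq_bigr => b _.
by rewrite -split2; case: ifP; rewrite ?mul1r ?mul0r.
Qed.

End QuadraticFormEquivalence.

Lemma LpE (A : finType) (p : pairT A) e a b :
  Lp p a b = ((p e a < p e b) && (p (~~ e) b < p (~~ e) a)) ||
             ((p e b < p e a) && (p (~~ e) a < p (~~ e) b)).
Proof. by rewrite /Lp; case: e => /=; nia. Qed.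

Lemma Lp_sym (A : finType) (p : pairT A) : symmetric (Lp p).
Proof. by move=> a b; rewrite !(LpE p false); lia. Qed.

Lemma Lp_irr (A : finType) (p : pairT A) : irreflexive (Lp p).
Proof. by move=> a; rewrite (LpE p false); lia. Qed.

Lemma pair_neq (A : finType) (p : pairT A) e b c :
  is_pair p -> b != c -> p e b != p e c.
Proof. by move=> /(_ e) [inj _]; apply: contra => /eqP /inj ->. Qed.

Lemma pair_lt_card (A : finType) (p : pairT A) e b c :
  is_pair p -> p e c = #|A| -> b != c -> p e b < #|A|.
Proof.
move=> pp pc /(pair_neq e pp); have [_ [rng _]] := pp e.
by rewrite pc; have := rng b; lia.
Qed.

Lemma qf_equiv_relabel (A A' : finType) (p : pairT A) (q : pairT A')
    (phi : A -> A') (psi : A' -> A) :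
  cancel phi psi -> cancel psi phi ->
  (forall a b, a != b -> Lp q (phi a) (phi b) = Lp p a b) ->
  qf_equiv (Qform p) (Qform q).
Proof.
move=> phiK psiK Lphi.
exists (fun v => [ffun a' => v (psi a')]); split; last split.
- by move=> c u v; apply/ffunP => a; rewrite !ffunE.
- exists (fun u : {ffun A' -> 'F_2} => [ffun a => u (phi a)]);
    by move=> v; apply/ffunP => a; rewrite !ffunE ?phiK ?psiK.
- move=> v; have phi_bij : {on [pred _ | true], bijective phi}.
    by apply: onW_bij; exists psi.
  rewrite /Qform (@sum_ordered_pairs _ _ _ (fun b => enum_rank (psi b))); first last.
  + by move=> a b; rewrite Lp_sym; ring.
  + by move=> a b /val_inj /enum_rank_inj /(can_inj psiK).
  + by move=> a b /val_inj /enum_rank_inj.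
  rewrite (reindex phi) //=; congr (_ + _)%R.
    by apply: eq_bigr => a _; rewrite !ffunE phiK.
  rewrite (reindex phi) //=; apply: eq_bigr => a _.
  rewrite (reindex phi) /=; last by apply: onW_bij; exists psi.
  apply: eq_big => [b|b _]; first by rewrite !phiK.
  rewrite !ffunE !phiK; have [->|ab] := eqVneq a b; first by rewrite !Lp_irr.
  by rewrite Lphi.
Qed.

Lemma qf_equiv_card_le1 (A A' : finType) (p : pairT A) (q : pairT A') :
  #|A| <= 1 -> #|A'| = #|A| -> qf_equiv (Qform p) (Qform q).
Proof.
move=> /card_le1_eqP A_le1 cardA.
pose phi (a : A) : A' := enum_val (cast_ord (esym cardA) (enum_rank a)).
pose psi (a : A') : A := enum_val (cast_ord cardA (enum_rank a)).
apply: (@qf_equiv_relabel _ _ p q phi psi).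
- by move=> a; rewrite /phi /psi enum_valK cast_ordKV enum_rankK.
- by move=> a; rewrite /phi /psi enum_valK cast_ordK enum_rankK.
- by move=> a b; rewrite (A_le1 a b) ?eqxx.
Qed.

Lemma perm_ofE (A : finType) (p : pairT A) a :
  is_pair p -> perm_of p (p false a) = p true a.
Proof.
move=> /(_ false) [p0_inj _]; rewrite /perm_of.
by case: pickP => [b /eqP /p0_inj -> // | /(_ a)]; rewrite eqxx.
Qed.

Lemma qf_equiv_same_perm (A A' : finType) (p : pairT A) (q : pairT A') :
  is_pair p -> is_pair q -> #|A'| = #|A| ->
  (forall k, 1 <= k <= #|A'| -> perm_of p k = perm_of q k) ->
  qf_equiv (Qform p) (Qform q).
Proof.
move=> pp qp cardA same_perm.
have [q0_inj [q0_rng q0_onto]] := qp false.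
have [p0_inj [p0_rng p0_onto]] := pp false.
have q0_hit a : exists a', q false a' == p false a.
  have [|a' ea] := q0_onto (p false a); first by rewrite cardA p0_rng.
  by exists a'; rewrite ea.
have p0_hit a' : exists a, p false a == q false a'.
  have [|a ea] := p0_onto (q false a'); first by rewrite -cardA q0_rng.
  by exists a; rewrite ea.
pose phi a := xchoose (q0_hit a); pose psi a' := xchoose (p0_hit a').
have phiE a : q false (phi a) = p false a by apply/eqP/(xchooseP (q0_hit a)).
have psiE a' : p false (psi a') = q false a' by apply/eqP/(xchooseP (p0_hit a')).
have phiE1 a : q true (phi a) = p true a.
  rewrite -(perm_ofE _ qp) phiE -same_perm ?perm_ofE // cardA; exact: p0_rng.
apply: (@qf_equiv_relabel _ _ p q phi psi).
- by move=> a; apply: p0_inj; rewrite psiE phiE.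
- by move=> a'; apply: q0_inj; rewrite phiE psiE.
- by move=> a b _; rewrite !(LpE _ false) /= !phiE !phiE1.
Qed.

Definition distinct_ends (A : finType) (p : pairT A) : Prop :=
  forall a, ~ (p false a = 1 /\ p true a = 1) /\
            ~ (p false a = #|A| /\ p true a = #|A|).

Lemma distinct_endsP (A : finType) (p : pairT A) e :
  distinct_ends p <->
  forall a, ~ (p e a = 1 /\ p (~~ e) a = 1) /\
            ~ (p e a = #|A| /\ p (~~ e) a = #|A|).
Proof. by case: e => //=; split=> ends a; have := ends a; tauto. Qed.

Lemma irreducible_distinct_ends (A : finType) (p : pairT A) :
  1 < #|A| -> is_pair p -> irreducible p -> distinct_ends p.
Proof.
move=> n_gt1 pp irr a; have [_ [rng0 _]] := pp false.
have [_ [rng1 _]] := pp true.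
have same_prefix k : 1 <= k < #|A| ->
    (forall b, (p false b <= k) = (p true b <= k)) -> False.
  move=> k_rng same; have := irr k k_rng; apply/negP; rewrite negbK.
  by apply/eqP/setP => b; rewrite !inE same.
split=> -[a0 a1].
- apply: (same_prefix 1); first lia.
  move=> b; have [->|ba] := eqVneq b a; first by rewrite a0 a1.
  have := pair_neq false pp ba; have := pair_neq true pp ba.
  by rewrite a0 a1; have := rng0 b; have := rng1 b; lia.
- apply: (same_prefix #|A|.-1); first lia.
  move=> b; have [->|ba] := eqVneq b a; first by rewrite a0 a1; lia.
  have := pair_neq false pp ba; have := pair_neq true pp ba.
  by rewrite a0 a1; have := rng0 b; have := rng1 b; lia.
Qed.

Section RauzyMove.
Variables (A : finType) (p r : pairT A) (e : bool) (z w : A).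
Hypotheses (pp : is_pair p) (ends : distinct_ends p).
Hypotheses (pz : p e z = #|A|) (pw : p (~~ e) w = #|A|).
Hypothesis re : forall b, r e b = p e b.
Hypothesis ro : forall b, r (~~ e) b =
  if p (~~ e) b <= p (~~ e) z then p (~~ e) b
  else if p (~~ e) b < #|A| then (p (~~ e) b).+1
  else (p (~~ e) z).+1.

Lemma winner_neq_loser : z != w.
Proof.
apply/eqP => zw; have [_ ends_z] := (distinct_endsP p e).1 ends z.
by apply: ends_z; rewrite {2}zw.
Qed.

Lemma rauzy_row_cases b :
  [\/ p (~~ e) b <= p (~~ e) z /\ r (~~ e) b = p (~~ e) b,
      p (~~ e) z < p (~~ e) b < #|A| /\ r (~~ e) b = (p (~~ e) b).+1 |
      p (~~ e) b = #|A| /\ r (~~ e) b = (p (~~ e) z).+1].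
Proof.
rewrite ro; have [_ [rng _]] := pp (~~ e); have := rng b.
case: ifP => [|z_lt]; first by constructor 1.
by case: ifP => [|b_n]; [constructor 2 | constructor 3]; lia.
Qed.

Lemma rauzy_move_is_pair : is_pair r.
Proof.
have [inj [rng onto]] := pp (~~ e).
have rz := pair_lt_card pp pw winner_neq_loser.
move=> e'; have [->|->] : e' = e \/ e' = ~~ e by case: (e) e' => [] []; auto.
  have [inj' [rng' onto']] := pp e; split; [|split].
  - by move=> b c; rewrite !re => /inj'.
  - by move=> b; rewrite re.
  - by move=> k /onto' [b <-]; exists b.
split; [|split].
- move=> b c; have := rauzy_row_cases b; have := rauzy_row_cases c.
  by have := rng b; have := rng c; move=> ? ? [] ? [] ? eq_r; apply: inj; lia.
- by move=> b; have := rng b; case: (rauzy_row_cases b); lia.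
- move=> k k_rng; have [k_le|k_gt] := leqP k (p (~~ e) z).
    have [b pb] := onto k (ltac:(lia)); exists b.
    by have := rng b; case: (rauzy_row_cases b); lia.
  have [->|k_ne] := eqVneq k (p (~~ e) z).+1.
    by exists w; case: (rauzy_row_cases w); lia.
  have [b pb] := onto k.-1 (ltac:(lia)); exists b.
  by have := rng b; case: (rauzy_row_cases b); lia.
Qed.

Lemma rauzy_move_distinct_ends : distinct_ends r.
Proof.
apply/(distinct_endsP r e) => a; rewrite re.
have [ends1 endsn] := (distinct_endsP p e).1 ends a.
have [_ [rng _]] := pp (~~ e).
split=> -[pa ra].
- by have := rng a; have := rng z; case: (rauzy_row_cases a); lia.
- have az : a = z by apply: (pp e).1; rewrite pa pz.
  by subst a; case: (rauzy_row_cases z); lia.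
Qed.

Lemma rauzy_move_qf_equiv : qf_equiv (Qform p) (Qform r).
Proof.
have zw := winner_neq_loser; have wz := zw; rewrite eq_sym in wz.
have [_ [rng _]] := pp (~~ e).
have e_lt b : b != z -> p e b < #|A| := pair_lt_card pp pz.
have ne_lt b : b != w -> p (~~ e) b < #|A| := pair_lt_card pp pw.
have cases := rauzy_row_cases.
apply: (@qf_equiv_transvection _ (Lp p) (Lp r) z w (@Lp_sym _ p) (@Lp_irr _ p)
  (@Lp_sym _ r) (@Lp_irr _ r)).
- move=> a b aw bw; have [->|ab] := eqVneq a b; first by rewrite !Lp_irr.
  rewrite !(LpE _ e) !re; have := pair_neq (~~ e) pp ab.
  have := ne_lt a aw; have := ne_lt b bw; have := rng a; have := rng b.
  by case: (cases a); case: (cases b); lia.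
- by rewrite (LpE _ e) pz pw; have := e_lt w wz; have := ne_lt z zw; lia.
- move=> b bw; rewrite !(LpE _ e) !re pz pw.
  have := e_lt w wz; have := ne_lt z zw; have := ne_lt b bw; have := rng b.
  have [->|bz] := eqVneq b z; first by case: (cases z); case: (cases w); lia.
  have := e_lt b bz; have := pair_neq e pp bw; have := pair_neq (~~ e) pp bz.
  by case: (cases b); case: (cases w); lia.
Qed.

End RauzyMove.

Lemma rauzy_move_preserves (A : finType) (p r : pairT A) e :
  is_pair p -> distinct_ends p -> rauzy_move e p r ->
  [/\ is_pair r, distinct_ends r & qf_equiv (Qform p) (Qform r)].
Proof.
move=> pp ends [z [pz [re ro]]].
have [_ [_ onto]] := pp (~~ e).
have [w pw] : exists w, p (~~ e) w = #|A|.
  by apply: onto; have := (pp e).2.1 z; lia.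
split; [exact: (rauzy_move_is_pair pp ends pz pw re ro)
       | exact: (rauzy_move_distinct_ends pp ends pz pw re ro)
       | exact: (rauzy_move_qf_equiv pp ends pz pw re ro)].
Qed.

Definition reverse_pair (A : finType) (p : pairT A) : pairT A :=
  fun e a => #|A|.+1 - p e a.

Lemma is_pair_reverse (A : finType) (p : pairT A) :
  is_pair (reverse_pair p) <-> is_pair p.
Proof.
rewrite /reverse_pair; split=> pp e; have [inj [rng onto]] := pp e.
- have rng' a : 1 <= p e a <= #|A| by have := rng a; lia.
  split; [|split] => //.
  + by move=> a b eab; apply: inj; rewrite eab.
  + move=> k k_rng; have [|a ea] := onto (#|A|.+1 - k); first lia.
    by exists a; have := rng' a; lia.
- split; [|split].
  + by move=> a b eab; apply: inj; have := rng a; have := rng b; lia.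
  + by move=> a; have := rng a; lia.
  + move=> k k_rng; have [|a ea] := onto (#|A|.+1 - k); first lia.
    by exists a; have := rng a; lia.
Qed.

Lemma distinct_ends_reverse (A : finType) (p : pairT A) :
  is_pair p -> distinct_ends (reverse_pair p) <-> distinct_ends p.
Proof.
move=> pp; have [_ [rng0 _]] := pp false; have [_ [rng1 _]] := pp true.
by rewrite /reverse_pair; split=> ends a; have := ends a;
  have := rng0 a; have := rng1 a; lia.
Qed.

Lemma Lp_reverse (A : finType) (p : pairT A) :
  is_pair p -> Lp (reverse_pair p) =2 Lp p.
Proof.
move=> pp a b; have le_n1 e' c : p e' c <= #|A|.+1.
  by have [_ [rng _]] := pp e'; have := rng c; lia.
by rewrite !(LpE _ false) /reverse_pair !ltn_sub2lE ?le_n1 // orbC.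
Qed.

(* This is where [distinct_ends] is needed: if the first letter of row [e] were
   also first in row [~~ e], the left move would send it to position 0. *)
Lemma left_rauzy_move_reverse (A : finType) (p r : pairT A) e :
  is_pair p -> distinct_ends p -> left_rauzy_move e p r ->
  rauzy_move e (reverse_pair p) (reverse_pair r).
Proof.
move=> pp ends [a [pa [re ro]]]; exists a; rewrite /reverse_pair pa subn1.
split=> //; split=> b; first by rewrite re.
have [ends_a _] := (distinct_endsP p e).1 ends a.
have [_ [rng _]] := pp (~~ e); have := rng a; have := rng b.
by rewrite ro; repeat case: ifP; lia.
Qed.

Lemma left_rauzy_move_preserves (A : finType) (p r : pairT A) e :
  is_pair p -> distinct_ends p -> left_rauzy_move e p r ->
  [/\ is_pair r, distinct_ends r & qf_equiv (Qform p) (Qform r)].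
Proof.
move=> pp ends mv; have pp' := (is_pair_reverse p).2 pp.
have [rp' ends' eqv] := rauzy_move_preserves pp'
  ((distinct_ends_reverse pp).2 ends) (left_rauzy_move_reverse pp ends mv).
have rp := (is_pair_reverse r).1 rp'.
split=> //; first exact: (distinct_ends_reverse rp).1 ends'.
by apply: qf_equiv_ext eqv => v; apply: eq_qform_of; apply: Lp_reverse.
Qed.

Lemma labeled_class_qf_equiv (A : finType) (p q : pairT A) :
  1 < #|A| -> is_pair p -> irreducible p -> in_labeled_class p q ->
  is_pair q /\ qf_equiv (Qform p) (Qform q).
Proof.
move=> n_gt1 pp irr cl.
suff [] : [/\ is_pair q, distinct_ends q & qf_equiv (Qform p) (Qform q)] by [].
elim: cl => [|q' r _ [qp ends eqv] [e mv]].
  by split; [| exact: irreducible_distinct_ends | exact: qf_equiv_refl].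
have [rp ends' eqv'] : [/\ is_pair r, distinct_ends r & qf_equiv (Qform q') (Qform r)].
  by case: mv; [exact: rauzy_move_preserves | exact: left_rauzy_move_preserves].
by split=> //; apply: qf_equiv_trans eqv eqv'.
Qed.

Theorem proposition2p17 (A : finType) (p : pairT A) :
  is_pair p -> irreducible p ->
  (forall q : pairT A, in_labeled_class p q -> qf_equiv (Qform p) (Qform q)) /\
  (forall (A' : finType) (q : pairT A'), is_pair q ->
     in_nonlabeled_class p #|A'| (perm_of q) -> qf_equiv (Qform p) (Qform q)).
Proof.
move=> pp irr; have [n_le1|n_gt1] := leqP #|A| 1.
  split=> [q _|A' q _ [p' [_ [cardA _]]]]; exact: qf_equiv_card_le1.
have cl := labeled_class_qf_equiv n_gt1 pp irr.
split=> [q /cl[] //|A' q qp [p' [/cl[p'p eqv] [cardA same_perm]]]].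
exact: qf_equiv_trans eqv (qf_equiv_same_perm p'p qp cardA same_perm).
Qed.
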